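(* Let $\kappa>0$ and $0<\alpha\le2$, and let $d_{\kappa,\alpha}(p,q)=\|p^{-1}\cdot q\|_{\kappa,\alpha}$ where $\|(x,y,z)\|_{\kappa,\alpha}=\kappa\sqrt{x^2+y^2}+\big((x^2+y^2)^2+4\alpha^2z^2\big)^{1/4}$. Then BCP does not hold for $d_{\kappa,\alpha}$ on $\mathbb H$.
   Context: $\mathbb H=\mathbb R^3$ with group law $(x,y,z)\cdot(x',y',z')=(x+x',y+y',z+z'+\tfrac12(xy'-yx'))$. BCP holds for $d$ if there is $N\geq1$ such that for every bounded $A$ and every family $\mathcal B$ of closed balls with each point of $A$ the center of some ball of $\mathcal B$, some subfamily $\mathcal F\subset\mathcal B$ satisfies $\chi_A\le\sum_{B\in\mathcal F}\chi_B\le N$. *)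

From Stdlib Require Import Reals List.
Open Scope R_scope.

Definition H : Type := (R * R * R)%type.

Definition hmul (p q : H) : H :=
  match p, q with
  | (x, y, z), (x', y', z') =>
      (x + x', y + y', z + z' + / 2 * (x * y' - y * x'))
  end.

Definition hinv (p : H) : H :=
  match p with (x, y, z) => (- x, - y, - z) end.

(* ||(x,y,z)||_{kappa,alpha} = kappa sqrt(x^2+y^2) + ((x^2+y^2)^2 + 4 alpha^2 z^2)^{1/4};
   the fourth root of a nonnegative number is written sqrt (sqrt _). *)
Definition knorm (kappa alpha : R) (p : H) : R :=
  match p with
  | (x, y, z) =>
      kappa * sqrt (x ^ 2 + y ^ 2)
      + sqrt (sqrt ((x ^ 2 + y ^ 2) ^ 2 + 4 * alpha ^ 2 * z ^ 2))
  end.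

Definition dka (kappa alpha : R) (p q : H) : R :=
  knorm kappa alpha (hmul (hinv p) q).

Definition cball (d : H -> H -> R) (c : H) (r : R) : H -> Prop :=
  fun q => d c q <= r.

Definition is_ball_at (d : H -> H -> R) (S : H -> Prop) (c : H) : Prop :=
  exists r, 0 < r /\ S = cball d c r.

Definition is_ball (d : H -> H -> R) (S : H -> Prop) : Prop :=
  exists c, is_ball_at d S c.

Definition bounded (d : H -> H -> R) (A : H -> Prop) : Prop :=
  exists c R0, forall a, A a -> d c a <= R0.

(* sum_{B in F} chi_B (p) <= N : at most N distinct members of F contain p *)
Definition mult_le (F : (H -> Prop) -> Prop) (N : nat) : Prop :=
  forall (p : H) (l : list (H -> Prop)),
    NoDup l -> (forall S, In S l -> F S /\ S p) -> (length l <= N)%nat.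

Definition BCP (d : H -> H -> R) : Prop :=
  exists N : nat, (1 <= N)%nat /\
    forall (A : H -> Prop) (B : (H -> Prop) -> Prop),
      bounded d A ->
      (forall S, B S -> is_ball d S) ->
      (forall a, A a -> exists S, B S /\ is_ball_at d S a) ->
      exists F : (H -> Prop) -> Prop,
        (forall S, F S -> B S) /\
        (forall a, A a -> exists S, F S /\ S a) /\
        mult_le F N.

(* Balls of d_{kappa,alpha} centred in the plane y = 0 and passing through the
   origin o can be arranged in arbitrarily large families where each ball misses
   all other centres: a new centre (m/4, K^2) placed far above a strip
   [m, S] x [0, W^2] containing the previous centres works once K is large,
   because there the metric behaves like kappa |dx| + sqrt |dw| with w = 2 alpha z.
   A Besicovitch subfamily covering those centres must then contain every ball,
   and they all contain o, so no multiplicity bound N survives. *)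
From Stdlib Require Import Reals List Lra Psatz.
Open Scope R_scope.

Lemma sqrt_le_of_le_sq (b y : R) : 0 <= b -> y <= b ^ 2 -> sqrt y <= b.
Proof. intros hb hy. rewrite <- (sqrt_pow2 b hb). exact (sqrt_le_1_alt _ _ hy). Qed.

Lemma le_sqrt_of_sq_le (b y : R) : b ^ 2 <= y -> b <= sqrt y.
Proof.
  intros hy. destruct (Rle_or_lt 0 b) as [hb | hb].
  - rewrite <- (sqrt_pow2 b hb). exact (sqrt_le_1_alt _ _ hy).
  - pose proof (sqrt_pos y). lra.
Qed.

Lemma sqrt_abs_le_qroot (u v : R) : sqrt (Rabs v) <= sqrt (sqrt (u ^ 4 + v ^ 2)).
Proof.
  apply sqrt_le_1_alt, le_sqrt_of_sq_le.
  rewrite pow2_abs. nra.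
Qed.

Lemma qroot_le_sqrt_abs (u v : R) : sqrt (sqrt (u ^ 4 + v ^ 2)) <= sqrt (u ^ 2 + Rabs v).
Proof.
  apply sqrt_le_1_alt, sqrt_le_of_le_sq.
  - pose proof (Rabs_pos v). nra.
  - rewrite <- (pow2_abs v). pose proof (Rabs_pos v). nra.
Qed.

Lemma sqrt_add_sq_le (c K : R) : 0 < K -> 0 <= c -> sqrt (c + K ^ 2) <= K + c / K.
Proof.
  intros hK hc. assert (hcK : 0 <= c / K) by (apply Rle_mult_inv_pos; lra).
  apply sqrt_le_of_le_sq; [lra|].
  replace ((K + c / K) ^ 2) with (K ^ 2 + 2 * c + (c / K) ^ 2) by (field; lra). nra.
Qed.

Lemma sqrt_sq_sub_ge (K w : R) : 0 < K -> 0 <= w <= K ^ 2 -> K - w / K <= sqrt (K ^ 2 - w).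
Proof.
  intros hK hw. apply le_sqrt_of_sq_le.
  replace ((K - w / K) ^ 2) with (K ^ 2 - 2 * w + (w / K) ^ 2) by (field; lra).
  assert (hw_eq : w = w / K * K) by (field; lra).
  assert (0 <= w / K) by (apply Rle_mult_inv_pos; lra).
  set (t := w / K) in *. nra.
Qed.

Lemma list_upper_bound {A : Type} (f : A -> R) (l : list A) :
  exists M, forall a, In a l -> f a <= M.
Proof.
  induction l as [|x l [M IH]].
  - exists 0. intros a [].
  - exists (Rmax (f x) M). intros a [<- | ha].
    + apply Rmax_l.
    + eapply Rle_trans; [apply IH, ha | apply Rmax_r].
Qed.

Section BallsThroughAPoint.

Variables (d : H -> H -> R) (o : H).

Definition ball_through (p : H) : H -> Prop := cball d p (d p o).

Definition separated (p q : H) : Prop :=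
  ~ ball_through p q /\ ~ ball_through q p.

Hypothesis d_refl : forall p, d p p = 0.

Lemma ball_through_center (p : H) : 0 < d p o -> ball_through p p.
Proof. intros hp. unfold ball_through, cball. rewrite d_refl. lra. Qed.

Lemma NoDup_balls_through (l : list H) :
  Forall (fun p => 0 < d p o) l -> ForallOrdPairs separated l ->
  NoDup (map ball_through l).
Proof.
  intros hpos hsep. induction hsep as [|p l hp hsep IH]; simpl; constructor.
  - intros hin. apply in_map_iff in hin as [q [hqp hq]].
    rewrite Forall_forall in hp. destruct (hp q hq) as [_ hq_misses_p].
    apply hq_misses_p. rewrite hqp. apply ball_through_center. now inversion hpos.
  - apply IH. now inversion hpos.
Qed.

Lemma cover_by_balls_through_contains_all (l : list H) (F : (H -> Prop) -> Prop) :
  ForallOrdPairs separated l ->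
  (forall S, F S -> exists q, In q l /\ S = ball_through q) ->
  (forall p, In p l -> exists S, F S /\ S p) ->
  forall p, In p l -> F (ball_through p).
Proof.
  intros hsep hF hcov p hp.
  destruct (hcov p hp) as [S [hS hSp]].
  destruct (hF S hS) as [q [hq ->]].
  destruct (ForallOrdPairs_In hsep q p hq hp) as [-> | [[hqp _] | [_ hqp]]];
    [exact hS | contradiction | contradiction].
Qed.

Lemma not_BCP_of_separated_families :
  (forall n, exists l, length l = n /\ Forall (fun p => 0 < d p o) l /\
                       ForallOrdPairs separated l) ->
  ~ BCP d.
Proof.
  intros hfam [N [_ hBCP]].
  destruct (hfam (S N)) as [l [hlen [hpos hsep]]].
  assert (hpos' : forall p, In p l -> 0 < d p o) by (apply Forall_forall, hpos).
  destruct (hBCP (fun p => In p l) (fun S => exists q, In q l /\ S = ball_through q))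
    as [F [hFB [hFcov hFmult]]].
  - destruct (list_upper_bound (d o) l) as [M hM]. now exists o, M.
  - intros S [q [hq ->]]. now exists q, (d q o); split; [apply hpos'|].
  - intros p hp. exists (ball_through p). split; [now exists p|].
    now exists (d p o); split; [apply hpos'|].
  - assert (hmult := hFmult o (map ball_through l) (NoDup_balls_through l hpos hsep)).
    rewrite length_map, hlen in hmult.
    enough (S N <= N)%nat by lia.
    apply hmult. intros S hS. apply in_map_iff in hS as [p [<- hp]]. split.
    + exact (cover_by_balls_through_contains_all l F hsep hFB hFcov p hp).
    + unfold ball_through, cball. lra.
Qed.

End BallsThroughAPoint.

Definition plane_dist (k s w s' w' : R) : R :=
  k * Rabs (s' - s) + sqrt (sqrt ((s' - s) ^ 4 + (w' - w) ^ 2)).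

(* For large K both fourth roots are K + O(1/K), so the first inequality is decided
   by the horizontal term k |s' - s| and the second by the vertical gap K^2 - w. *)
Section StripEstimates.

Variables (k m S W K : R).
Hypotheses (hk : 0 < k) (hm : 0 < m) (hW : 0 <= W) (hK1 : 1 <= K)
  (hK_strip : (k + 1) * S + W + W ^ 2 < K) (hK_width : 2 * (m ^ 2 + W ^ 2) < k * m * K).
Variables (s w : R).
Hypotheses (hs : m <= s <= S) (hw : 0 <= w <= W ^ 2).

Lemma plane_dist_new_center_lt : plane_dist k (m / 4) (K ^ 2) 0 0 < plane_dist k (m / 4) (K ^ 2) s w.
Proof.
  unfold plane_dist.
  assert (hwK : w <= K ^ 2) by nra.
  pose proof (qroot_le_sqrt_abs (0 - m / 4) (0 - K ^ 2)) as hup.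
  pose proof (sqrt_abs_le_qroot (s - m / 4) (w - K ^ 2)) as hlo.
  rewrite Rabs_left1 in hup by nra. rewrite Rabs_left1 in hlo by lra.
  replace (- (0 - K ^ 2)) with (K ^ 2) in hup by ring.
  replace (- (w - K ^ 2)) with (K ^ 2 - w) in hlo by ring.
  pose proof (sqrt_add_sq_le ((0 - m / 4) ^ 2) K ltac:(lra) ltac:(nra)) as hup'.
  pose proof (sqrt_sq_sub_ge K w ltac:(lra) ltac:(lra)) as hlo'.
  rewrite Rabs_left1 by lra. rewrite Rabs_right by lra.
  assert (hsum : ((0 - m / 4) ^ 2 + w) / K < k * m / 2).
  { apply Rmult_lt_reg_r with K; [lra|]. field_simplify; [|lra]. nra. }
  assert (((0 - m / 4) ^ 2 + w) / K = (0 - m / 4) ^ 2 / K + w / K) by (field; lra).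
  assert (k * m <= k * s) by nra.
  lra.
Qed.

Lemma plane_dist_old_center_lt : plane_dist k s w 0 0 < plane_dist k s w (m / 4) (K ^ 2).
Proof.
  unfold plane_dist.
  pose proof (qroot_le_sqrt_abs (0 - s) (0 - w)) as hup.
  pose proof (sqrt_abs_le_qroot (m / 4 - s) (K ^ 2 - w)) as hlo.
  rewrite Rabs_left1 in hup by lra. rewrite Rabs_right in hlo by nra.
  replace (- (0 - w)) with w in hup by ring.
  assert (hup' : sqrt ((0 - s) ^ 2 + w) <= s + W) by (apply sqrt_le_of_le_sq; nra).
  pose proof (sqrt_sq_sub_ge K w ltac:(lra) ltac:(nra)) as hlo'.
  assert (hwK : w / K <= W ^ 2).
  { apply Rmult_le_reg_r with K; [lra|]. field_simplify; [|lra]. nra. }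
  rewrite Rabs_left1 by lra. pose proof (Rabs_pos (m / 4 - s)).
  nra.
Qed.

End StripEstimates.

Definition plane_pt (a s w : R) : H := (s, 0, w / (2 * a)).

Lemma dka_plane_pt (k a s w s' w' : R) : a <> 0 ->
  dka k a (plane_pt a s w) (plane_pt a s' w') = plane_dist k s w s' w'.
Proof.
  intros ha. unfold dka, knorm, hmul, hinv, plane_pt, plane_dist; cbv beta iota.
  replace ((- s + s') ^ 2 + (- 0 + 0) ^ 2) with (Rsqr (s' - s)) by (unfold Rsqr; ring).
  rewrite sqrt_Rsqr_abs.
  do 3 f_equal. unfold Rsqr. field. exact ha.
Qed.

Lemma dka_refl (k a : R) (p : H) : dka k a p p = 0.
Proof.
  destruct p as [[x y] z]. unfold dka, knorm, hmul, hinv; cbv beta iota.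
  replace ((- x + x) ^ 2 + (- y + y) ^ 2) with 0 by ring.
  replace (- z + z + / 2 * (- x * y - - y * x)) with 0 by ring.
  replace (0 ^ 2 + 4 * a ^ 2 * 0 ^ 2) with 0 by ring.
  rewrite !sqrt_0. ring.
Qed.

Section StripFamilies.

Variables (k a : R).
Hypotheses (hk : 0 < k) (ha : a <> 0).

Let o : H := plane_pt a 0 0.

Definition in_strip (m S W : R) (p : H) : Prop :=
  exists s w, p = plane_pt a s w /\ m <= s <= S /\ 0 <= w <= W ^ 2.

Lemma in_strip_widen (m S W m' S' W' : R) (p : H) :
  m' <= m -> S <= S' -> 0 <= W <= W' -> in_strip m S W p -> in_strip m' S' W' p.
Proof.
  intros hm hS hW (s & w & -> & hs & hw). exists s, w. split; [reflexivity|]. nra.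
Qed.

Lemma dka_in_strip_origin_pos (m S W : R) (p : H) :
  0 < m -> in_strip m S W p -> 0 < dka k a p o.
Proof.
  intros hm (s & w & -> & hs & hw). unfold o. rewrite dka_plane_pt by exact ha.
  unfold plane_dist. rewrite Rabs_left1 by lra.
  pose proof (sqrt_pos (sqrt ((0 - s) ^ 4 + (0 - w) ^ 2))). nra.
Qed.

Lemma separated_from_strip (m S W K : R) (p : H) :
  0 < m -> 0 <= W -> 1 <= K -> (k + 1) * S + W + W ^ 2 < K ->
  2 * (m ^ 2 + W ^ 2) < k * m * K ->
  in_strip m S W p -> separated (dka k a) o (plane_pt a (m / 4) (K ^ 2)) p.
Proof.
  intros hm hW hK1 hK_strip hK_width (s & w & -> & hs & hw).
  unfold separated, ball_through, cball, o. rewrite !dka_plane_pt by exact ha.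
  pose proof (plane_dist_new_center_lt k m S W K hk hm hW hK1 hK_strip hK_width s w hs hw).
  pose proof (plane_dist_old_center_lt k m S W K hk hm hW hK1 hK_strip s w hs hw).
  lra.
Qed.

Lemma strip_families (n : nat) : exists l m S W,
  0 < m <= S /\ 0 <= W /\ length l = n /\ Forall (in_strip m S W) l /\
  ForallOrdPairs (separated (dka k a) o) l.
Proof.
  induction n as [|n (l & m & S & W & hmS & hW & hlen & hstrip & hsep)].
  - exists nil, 1, 1, 0. repeat split; try lra; constructor.
  - set (D := 2 * (m ^ 2 + W ^ 2) / (k * m)).
    set (K := (k + 1) * S + W + W ^ 2 + D + 1).
    assert (hD : k * m * D = 2 * (m ^ 2 + W ^ 2)) by (unfold D; field; lra).
    assert (hD0 : 0 <= D) by (apply Rle_mult_inv_pos; nra).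
    assert (hX : 0 <= (k + 1) * S + W + W ^ 2) by nra.
    assert (hK_strip : (k + 1) * S + W + W ^ 2 < K) by (unfold K; lra).
    assert (hK1 : 1 <= K) by (unfold K; lra).
    assert (hWK : W <= K) by nra.
    assert (hK_width : 2 * (m ^ 2 + W ^ 2) < k * m * K).
    { assert (0 < k * m) by nra. unfold K. nra. }
    clearbody K.
    exists (plane_pt a (m / 4) (K ^ 2) :: l), (m / 4), S, K.
    split; [lra|]. split; [lra|]. split; [simpl; lia|]. split.
    + constructor.
      * exists (m / 4), (K ^ 2). split; [reflexivity|]. nra.
      * eapply Forall_impl; [|exact hstrip].
        intros p. apply in_strip_widen; lra.
    + constructor; [|exact hsep].
      eapply Forall_impl; [|exact hstrip].
      intros p. apply separated_from_strip; lra.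
Qed.

End StripFamilies.

Theorem mainTheorem8 (kappa alpha : R) (hk : 0 < kappa) (ha : 0 < alpha) (ha2 : alpha <= 2) :
  ~ BCP (dka kappa alpha).
Proof.
  assert (ha0 : alpha <> 0) by lra.
  apply (not_BCP_of_separated_families _ (plane_pt alpha 0 0) (dka_refl kappa alpha)).
  intros n.
  destruct (strip_families kappa alpha hk ha0 n) as (l & m & S & W & hmS & _ & hlen & hstrip & hsep).
  exists l. repeat split; [exact hlen | | exact hsep].
  eapply Forall_impl; [|exact hstrip].
  intros p. apply dka_in_strip_origin_pos; tauto.
Qed.
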